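(* Let $G$ be a connected graph on $n\geq 3$ vertices with $q(G)=2$ and minimum degree $\delta(G)\geq 3$, and let $v\in V(G)$ have eccentricity $\epsilon(v)$. Suppose every vertex of $N_i(v)$ for $i=2,3,\ldots,\epsilon(v)-1$ has exactly two predecessors, and each $N_i(v)$ for $i=1,2,\ldots,\epsilon(v)-1$ is an independent set. Then $d_0\le d_1\le\cdots\le d_{\epsilon(v)-1}$, where $d_i=|N_i(v)|$.
   Context: For a graph $G$ on $n$ vertices, $\mathcal{S}(G)$ is the set of real symmetric $n\times n$ matrices $A=[a_{ij}]$ with $a_{ij}\neq0$ for $i\ne j$ iff $\{i,j\}\in E(G)$ (diagonal unrestricted); $q(G)$ is the minimum number of distinct eigenvalues of a matrix in $\mathcal{S}(G)$. For $v\in V(G)$, $N_i(v)$ is the set of vertices at distance exactly $i$ from $v$ (so $N_0(v)=\{v\}$), and the eccentricity $\epsilon(v)$ is the maximum distance from $v$ to a vertex of $G$. If $u\in N_{i-1}(v)$ and $w\in N_i(v)$ are adjacent, $u$ is a predecessor of $w$ and $w$ a successor of $u$. *)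

From HB Require Import structures.
From mathcomp Require Import all_boot all_order all_algebra.
From mathcomp Require Import reals.
Set Implicit Arguments. Unset Strict Implicit. Unset Printing Implicit Defensive.
Import Order.TTheory GRing.Theory Num.Theory.

Definition simple_graph n (e : rel 'I_n) : Prop :=
  (forall x y, e x y = e y x) /\ (forall x, ~~ e x x).

Definition connected_graph n (e : rel 'I_n) : Prop :=
  forall x y, connect e x y.

Definition degree n (e : rel 'I_n) (x : 'I_n) : nat := #|[set y | e x y]|.

Fixpoint ball n (e : rel 'I_n) (v : 'I_n) (k : nat) : {set 'I_n} :=
  if k is k'.+1 then ball e v k' :|: [set y | [exists x in ball e v k', e x y]]
  else [set v].

(* distance: least k with w reachable in at most k steps (shortest walks have
   length < n, so searching k < n suffices in a connected graph) *)
Definition dist n (e : rel 'I_n) (v w : 'I_n) : nat :=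
  find (fun k => w \in ball e v k) (iota 0 n).

Definition Nset n (e : rel 'I_n) (v : 'I_n) (i : nat) : {set 'I_n} :=
  [set w | dist e v w == i].

Definition ecc n (e : rel 'I_n) (v : 'I_n) : nat := \max_(w : 'I_n) dist e v w.

Definition preds n (e : rel 'I_n) (v w : 'I_n) : {set 'I_n} :=
  [set u | (u \in Nset e v (dist e v w).-1) && e u w].

Definition independent n (e : rel 'I_n) (A : {set 'I_n}) : Prop :=
  forall x y, x \in A -> y \in A -> ~~ e x y.

Local Open Scope ring_scope.

Definition in_SG (R : realType) n (e : rel 'I_n) (A : 'M[R]_n) : Prop :=
  A^T = A /\ (forall i j, i != j -> (A i j != 0) = e i j).

Definition num_distinct_eig (R : realType) n (A : 'M[R]_n) (k : nat) : Prop :=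
  exists s : seq R, [/\ uniq s, size s = k & forall a, eigenvalue A a <-> a \in s].

Definition q_eq (R : realType) n (e : rel 'I_n) (m : nat) : Prop :=
  (exists A : 'M[R]_n, in_SG e A /\ num_distinct_eig A m) /\
  (forall (A : 'M[R]_n) k, in_SG e A -> num_distinct_eig A k -> (m <= k)%N).

From HB Require Import structures.
From mathcomp Require Import all_boot all_order all_algebra.
From mathcomp Require Import reals.
From mathcomp Require Import zify sesquilinear spectral complex.
Set Implicit Arguments. Unset Strict Implicit. Unset Printing Implicit Defensive.
Import Order.TTheory GRing.Theory Num.Theory.

(* Since q(G) = 2, some A in S(G) with two eigenvalues l1, l2 satisfies
   (A - l1)(A - l2) = 0 (spectral theorem).  At nonadjacent vertices u, x this
   entry is the sum over common neighbours w of A u w * A w x, so u and x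
   cannot have exactly one common neighbour.  Minimum degree 3, at most two
   predecessors and independent layers give every vertex of N_k a successor w,
   and w a successor x; the second common neighbour of u and x is a second
   successor of u.  As every vertex of N_(k+1) has exactly two predecessors,
   counting the edges between N_k and N_(k+1) gives d_k <= d_(k+1). *)

Lemma card_sep_sum (T : finType) (A : {set T}) (p : pred T) :
  #|[set x in A | p x]| = \sum_(x in A) p x.
Proof.
rewrite -sum1_card [RHS]big_mkcond [LHS]big_mkcond; apply: eq_bigr => x _.
by rewrite inE; case: (x \in A); case: (p x).
Qed.

Lemma double_count_rel (T : finType) (r : rel T) (A B : {set T}) :
  \sum_(a in A) #|[set b in B | r a b]| = \sum_(b in B) #|[set a in A | r a b]|.
Proof.
under eq_bigr do rewrite card_sep_sum; rewrite exchange_big.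
by apply: eq_bigr => b _; rewrite card_sep_sum.
Qed.

Lemma leq_card_double_count (T : finType) (r : rel T) (A B : {set T}) c :
  0 < c -> {in A, forall a, c <= #|[set b in B | r a b]|} ->
  {in B, forall b, #|[set a in A | r a b]| <= c} -> #|A| <= #|B|.
Proof.
move=> c_gt0 cA cB; rewrite -(leq_pmul2r c_gt0) -!sum_nat_const.
apply: (@leq_trans (\sum_(a in A) #|[set b in B | r a b]|)); first exact: leq_sum.
by rewrite double_count_rel; apply: leq_sum.
Qed.

Local Open Scope ring_scope.

Section NormalMatrix.
Variables (C : numClosedFieldType) (n : nat) (A : 'M[C]_n).
Hypothesis Anormal : A \is normalmx.
Local Notation P := (spectralmx A).
Local Notation d := (spectral_diag A).

Lemma spectral_row_eigenvector j : row j P *m A = d 0 j *: row j P.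
Proof.
have PA : P *m A = diag_mx d *m P.
  by rewrite {2}(orthomx_spectralP Anormal) !mulmxA mulmxV ?spectral_unit // mul1mx.
by rewrite -row_mul PA row_mul row_diag_mx -scalemxAl -rowE.
Qed.

Lemma spectral_row_neq0 j : row j P != 0.
Proof.
apply: contraTneq isT => Pj0; have /unitarymxP/(congr1 (row j)) := spectral_unitarymx A.
rewrite row_mul Pj0 mul0mx row1 => /rowP/(_ j).
by rewrite !mxE !eqxx mulr1n => /esym/eqP; rewrite oner_eq0.
Qed.

Lemma eigenvalue_spectral_diag j : eigenvalue A (d 0 j).
Proof. by apply/eigenvalueP; exists (row j P); rewrite ?spectral_row_eigenvector ?spectral_row_neq0. Qed.

Lemma normalmx_spectral_root2 c1 c2 :
  (forall j, (d 0 j - c1) * (d 0 j - c2) = 0) -> (A - c1%:M) *m (A - c2%:M) = 0.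
Proof.
move=> droot; have rowB j c B : row j P *m ((A - c%:M) *m B) = (d 0 j - c) *: (row j P *m B).
  by rewrite mulmxA mulmxBr spectral_row_eigenvector mul_mx_scalar -scalerBl scalemxAl.
suff : P *m ((A - c1%:M) *m (A - c2%:M)) = 0.
  by move/(congr1 (mulmx (invmx P))); rewrite mulmx0 mulKmx ?spectral_unit.
apply/row_matrixP => j; rewrite row_mul row0 rowB -[X in _ *m X]mulmx1 rowB.
by rewrite mulmx1 scalerA droot scale0r.
Qed.

End NormalMatrix.

Lemma symmx_eigenvalues2 (R : rcfType) n (A : 'M[R]_n) (l1 l2 : R) :
  A^T = A -> (forall a, eigenvalue A a -> a = l1 \/ a = l2) ->
  (A - l1%:M) *m (A - l2%:M) = 0.
Proof.
move=> Asym Aeig; pose f := @real_complex R.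
pose Ac := map_mx f A.
have Acherm : Ac \is hermsymmx.
  apply: realsym_hermsym.
    by apply/is_hermitianmxP; rewrite expr0 scale1r map_mx_id // map_trmx Asym.
  by apply/mxOverP => i j; rewrite mxE; apply/complex_realP; exists (A i j).
have : (Ac - (f l1)%:M) *m (Ac - (f l2)%:M) = 0.
  apply: normalmx_spectral_root2 => [|j]; first exact: hermitian_normalmx.
  set c := spectral_diag Ac 0 j.
  have cE : c = f (complex.Re c).
    by rewrite /f complexRe; apply/esym/Creal_ReP/(mxOverP (hermitian_spectral_diag_real Acherm)).
  have := eigenvalue_spectral_diag (hermitian_normalmx Acherm) j; rewrite -/c cE.
  rewrite eigenvalue_root_char -map_char_poly fmorph_root -eigenvalue_root_char.
  by case/Aeig => ->; rewrite subrr ?mul0r ?mulr0.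
by move=> Mc0; apply/eqP; rewrite -(map_mx_eq0 f) map_mxM !map_mxB !map_scalar_mx Mc0.
Qed.

Section SymmetricGraphMatrix.
Variables (R : realType) (n : nat) (e : rel 'I_n) (A : 'M[R]_n).
Hypotheses (eirr : forall x, ~~ e x x) (AG : in_SG e A).

Lemma in_SG_eq0 i j : i != j -> ~~ e i j -> A i j = 0.
Proof. by move=> nij neij; apply: contraNeq neij; rewrite AG.2. Qed.

Lemma in_SG_neq0 i j : e i j -> A i j != 0.
Proof. by move=> eij; rewrite AG.2 //; apply: contraTneq eij => ->; apply: eirr. Qed.

Lemma in_SG_sqr_nonadj u x : u != x -> ~~ e u x ->
  (A *m A) u x = \sum_(k | e u k && e k x) A u k * A k x.
Proof.
move=> nux neux; rewrite mxE [LHS](bigID (fun k => e u k && e k x)) /= addrC big1 ?add0r //.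
move=> k /nandP nk; have [->|nku] := eqVneq k u; first by rewrite (in_SG_eq0 nux neux) mulr0.
have [->|nkx] := eqVneq k x; first by rewrite (in_SG_eq0 nux neux) mul0r.
have nuk : u != k by rewrite eq_sym.
by case: nk => nek; rewrite (in_SG_eq0 _ nek) ?mul0r ?mulr0.
Qed.

Lemma in_SG_quadratic_nonadj (l1 l2 : R) u x : u != x -> ~~ e u x ->
  ((A - l1%:M) *m (A - l2%:M)) u x = (A *m A) u x.
Proof.
move=> nux neux; have Aux : A u x = 0 by rewrite in_SG_eq0.
rewrite mulmxBl mulmxBr mul_mx_scalar mul_scalar_mx !mxE Aux (negPf nux).
by rewrite mulr0n !(subr0, mulr0).
Qed.

End SymmetricGraphMatrix.

Lemma q2_second_common_neighbor (R : realType) n (e : rel 'I_n) :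
  simple_graph e -> q_eq R e 2 -> forall u x w, u != x -> ~~ e u x -> e u w -> e w x ->
  exists2 w', w' != w & e u w' && e w' x.
Proof.
move=> [_ eirr] [[A [AG [s [_ s2 Aeig]]]] _] u x w nux neux euw ewx.
case: s s2 Aeig => [|l1 [|l2 []]] // _ Aeig.
have [/existsP [w' /andP [nw'w uw'x]]|/existsPn unique_w] :=
  boolP [exists w', (w' != w) && (e u w' && e w' x)]; first by exists w'.
have : (A *m A) u x = 0.
  rewrite -(in_SG_quadratic_nonadj AG l1 l2) // (symmx_eigenvalues2 AG.1) ?mxE //.
  by move=> a /Aeig; rewrite !inE => /orP [] /eqP ->; [left|right].
rewrite (in_SG_sqr_nonadj AG) // (big_pred1 w) => [|k].
  by move/eqP; rewrite mulf_eq0 !(negPf (in_SG_neq0 eirr AG _)).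
apply/idP/eqP => [ukx|->]; last by rewrite euw.
by apply/eqP; have := unique_w k; rewrite ukx andbT negbK.
Qed.

Local Close Scope ring_scope.

Section Layers.
Variables (n : nat) (e : rel 'I_n) (v : 'I_n).
Hypotheses (esym : forall x y, e x y = e y x) (eirr : forall x, ~~ e x x).
Hypothesis econn : connected_graph e.
Local Notation D := (dist e v).
Local Notation N := (Nset e v).
Local Notation E := (ecc e v).-1.

Lemma mem_ball_edge k x y : x \in ball e v k -> e x y -> y \in ball e v k.+1.
Proof. by move=> xk exy; rewrite /= !inE; apply/orP; right; apply/existsP; exists x; rewrite xk. Qed.

Lemma mem_ball_path k x p :
  x \in ball e v k -> path e x p -> last x p \in ball e v (k + size p).
Proof.
elim: p x k => [|y p IHp] x k xk /=; first by rewrite addn0.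
by case/andP=> exy yp; rewrite addnS -addSn; apply: IHp (mem_ball_edge xk exy) yp.
Qed.

(* A shortest walk from v repeats no vertex, hence has length < n. *)
Lemma ball_exists x : exists2 k, k < n & x \in ball e v k.
Proof.
have /connectP [p vp ->] := econn v x.
have [p' vp' up' _] := shortenP vp.
exists (size p'); last by rewrite -[size p']add0n mem_ball_path //= inE.
by have := max_card (mem (v :: p')); rewrite (card_uniqP up') card_ord.
Qed.

Lemma dist_ltn_mem_ball x : D x < n /\ x \in ball e v (D x).
Proof.
have [k kn xk] := ball_exists x.
have hasx : has (fun k => x \in ball e v k) (iota 0 n).
  by apply/hasP; exists k; rewrite ?mem_iota.
have := hasx; rewrite has_find size_iota => Dxn.
by split; last by have := nth_find 0 hasx; rewrite nth_iota.
Qed.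

Lemma dist_le x k : x \in ball e v k -> D x <= k.
Proof.
move=> xk; have [kn|nk] := ltnP k n; last first.
  by have [Dxn _] := dist_ltn_mem_ball x; rewrite ltnW // (leq_trans Dxn).
rewrite leqNgt; apply/negP => /(before_find 0).
by rewrite nth_iota // xk.
Qed.

Lemma dist_edge x y : e x y -> D y <= (D x).+1.
Proof. by move=> exy; have [_ xD] := dist_ltn_mem_ball x; apply/dist_le/(mem_ball_edge xD). Qed.

Lemma dist_eq0 x : (D x == 0) = (x == v).
Proof.
apply/eqP/eqP => [Dx0|->]; last by apply/eqP; rewrite -leqn0 dist_le //= inE.
by have [_] := dist_ltn_mem_ball x; rewrite Dx0 inE => /eqP.
Qed.

Lemma Nset0 : N 0 = [set v].
Proof. by apply/setP => y; rewrite !inE dist_eq0. Qed.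

Lemma neighbor_Nset1 y : e v y -> y \in N 1.
Proof.
move=> evy; have Dv0 : D v = 0 by apply/eqP; rewrite dist_eq0.
have : D y != 0 by rewrite dist_eq0; apply: contraTneq evy => ->.
by have := dist_edge evy; rewrite inE Dv0; lia.
Qed.

Lemma neighbor_Nset j u y : u \in N j -> e u y -> [|| D y == j.-1, D y == j | D y == j.+1].
Proof.
rewrite inE => /eqP Du euy; have := dist_edge euy; rewrite esym in euy.
by have := dist_edge euy; rewrite Du; lia.
Qed.

Lemma preds_Nset j w : w \in N j -> preds e v w = [set u in N j.-1 | e u w].
Proof. by rewrite inE => /eqP Dw; apply/setP => u; rewrite !inE Dw. Qed.

Hypothesis min_degree3 : forall x, 3 <= degree e x.
Hypothesis preds2 : forall i, 2 <= i <= E -> forall w, w \in N i -> #|preds e v w| = 2.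
Hypothesis Nset_independent : forall i, 1 <= i <= E -> independent e (N i).

Lemma card_lower_neighbors_le2 j u : 1 <= j <= E -> u \in N j ->
  #|[set y in N j.-1 | e y u]| <= 2.
Proof.
move=> /andP [j_gt0 jE] uNj; have [j1|j_gt1] := leqP j 1.
  have -> : j.-1 = 0 by lia.
  rewrite Nset0; apply: (@leq_trans #|[set v]|); last by rewrite cards1.
  by apply/subset_leq_card/subsetP => y; rewrite !inE => /andP [].
by rewrite -(preds2 _ uNj) ?j_gt1 // (preds_Nset uNj).
Qed.

Lemma exists_successor j u : 1 <= j <= E -> u \in N j -> exists2 w, w \in N j.+1 & e u w.
Proof.
move=> jr uNj.
have [/exists_inP [w ? ?]|/exists_inPn no_succ] := boolP [exists w in N j.+1, e u w].
  by exists w.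
suff : #|[set y | e u y]| <= 2 by have := min_degree3 u; rewrite /degree; lia.
apply: leq_trans (card_lower_neighbors_le2 jr uNj); apply: subset_leq_card.
apply/subsetP => y; rewrite !inE => euy; rewrite esym euy andbT.
have y_notin_Nj : y \notin N j by apply: contraL euy => /(Nset_independent jr uNj).
have y_notin_Nj1 : y \notin N j.+1 by apply: contraL euy => /no_succ.
move: y_notin_Nj y_notin_Nj1 (neighbor_Nset uNj euy); rewrite !inE.
by move=> /negPf -> /negPf ->; rewrite !orbF.
Qed.

Hypothesis second_common_neighbor : forall u x w,
  u != x -> ~~ e u x -> e u w -> e w x -> exists2 w', w' != w & e u w' && e w' x.

Lemma two_successors k u : 0 < k < E -> u \in N k -> 1 < #|[set w in N k.+1 | e u w]|.
Proof.
move=> kr uNk; have [w wNk1 euw] := exists_successor (j := k) (ltac:(lia)) uNk.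
have [x xNk2 ewx] := exists_successor (j := k.+1) (ltac:(lia)) wNk1.
have [w' w'w /andP [euw' ew'x]] : exists2 w', w' != w & e u w' && e w' x.
  move: uNk xNk2; rewrite !inE => /eqP Du /eqP Dx.
  apply: second_common_neighbor euw ewx; first by apply/eqP => ux; move: Dx; rewrite -ux Du; lia.
  by apply/negP => /dist_edge; rewrite Du Dx; lia.
have w'Nk1 : w' \in N k.+1.
  move: uNk xNk2; rewrite !inE => /eqP Du /eqP Dx.
  by have := dist_edge euw'; have := dist_edge ew'x; rewrite Du Dx; lia.
apply: (@leq_trans #|[set w; w']|); first by rewrite cards2 eq_sym w'w.
by apply/subset_leq_card/subsetP => y /set2P [] ->; apply/setIdP.
Qed.

End Layers.

Theorem mainTheorem5 (R : realType) (n : nat) (e : rel 'I_n) (v : 'I_n) :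
  simple_graph e -> connected_graph e -> (3 <= n)%N ->
  q_eq R e 2 ->
  (forall x, 3 <= degree e x)%N ->
  (forall i, (2 <= i <= (ecc e v).-1)%N ->
     forall w, w \in Nset e v i -> #|preds e v w| = 2) ->
  (forall i, (1 <= i <= (ecc e v).-1)%N -> independent e (Nset e v i)) ->
  forall i, (i.+1 <= (ecc e v).-1)%N ->
    (#|Nset e v i| <= #|Nset e v i.+1|)%N.
Proof.
move=> [esym eirr] econn _ q2 deg3 preds2 indep [|k] kE.
  have /card_gt0P [y] : 0 < #|[set y | e v y]| by have := deg3 v; rewrite /degree; lia.
  rewrite inE => /(neighbor_Nset1 eirr econn) yN1.
  by rewrite Nset0 // cards1; apply/card_gt0P; exists y.
apply: (@leq_card_double_count _ e _ _ 2) => // [u uNk | w wNk1].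
  have q2_nbr := q2_second_common_neighbor (conj esym eirr) q2.
  exact: (two_successors esym econn deg3 preds2 indep q2_nbr).
by rewrite -(preds_Nset wNk1) (preds2 _ _ _ wNk1) // ltnW.
Qed.
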